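(* In the setting of the context, let $z^\odot\in\overline{\mathbb{U}}$ be such that the stable root $\kappa_s$ extends continuously to $z^\odot$ with value $\kappa_s(z^\odot)$, and suppose $\lim_{z\to z^\odot,\,z\in\mathbb{U}}\langle KL\rangle(z)=0$. Then $(z^\odot,\kappa_s(z^\odot))$ is a shared eigenvalue between bulk and boundary scheme, i.e. $\det\big(z^\odot I_q-\sum_{\ell=0}^{w}B_{0,\ell}\kappa_s(z^\odot)^\ell\big)=0$ (in addition to $\kappa_s(z^\odot)$ being a root of the bulk characteristic equation at $z^\odot$).
   Context: Notation: $\mathbb{D}=\{|z|<1\}$, $\mathbb{U}=\{|z|>1\}$, $\overline{\mathbb{U}}=\{|z|\geq1\}$; $e_i$ canonical basis vectors. Data: $q\geq2$, pairwise distinct velocities $c_i\in\mathbb{Z}$ with $\max_ic_i=1$ and $\pi$ the unique index with $c_\pi=1$; invertible $M\in\mathbb{R}^{q\times q}$; $s_1\in\mathbb{R}$, $s_2,\dots,s_q\in(0,2]$; $\epsilon\in\mathbb{R}^q$, $\epsilon_1=1$; $K:=I_q+\mathrm{diag}(s_1,\dots,s_q)(\epsilon e_1^{\mathsf T}-I_q)$; $\hat E(\kappa):=M\mathrm{diag}(\kappa^{-c_1},\dots,\kappa^{-c_q})M^{-1}K$. The scheme is von Neumann stable ($\mathrm{sp}\hat E(e^{i\vartheta})\subset\{|z|\le1\}$ for all real $\vartheta$), and $\det(zI_q-\hat E(\kappa))=d_{-1}(z)\kappa^{-1}+\sum_{\ell=0}^{\bar p}d_\ell(z)\kappa^\ell$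 with $d_{-1}\not\equiv0$. For $z\in\mathbb{U}$, $\kappa_s(z)\in\mathbb{D}$ is the stable root of $\det(zI_q-\hat E(\kappa))=0$, and $\varphi_s(z)$ spans $\ker(zI_q-\hat E(\kappa_s(z)))$, normalized so that its first component equals $1$. Kinetic boundary condition at the ghost point: $f^{n\star}_{\pi,-1}=\sum_{\ell=1}^q\sum_{h=0}^{w}b_{\pi,\ell,1,h}f^{n\star}_{\ell,h}+g^n_{\pi,-1}$ (distribution functions $f=M^{-1}m$), giving boundary matrices $B_{0,\ell}:=M\big(\sum_{i:\,c_i=-\ell}e_ie_i^{\mathsf T}+e_\pi\sum_{h=1}^qb_{\pi,h,1,\ell}e_h^{\mathsf T}\big)M^{-1}K$, $\ell=0,\dots,w$. The Kreiss–Lopatinskii scalar product is $\langle KL\rangle(z):=\big(e_\pi^{\mathsf T}\kappa_s(z)^{-1}-\sum_{\ell=0}^{w}\sum_{h=1}^qe_h^{\mathsf T}b_{\pi,h,1,\ell}\kappa_s(z)^\ell\big)M^{-1}K\varphi_s(z)$. *)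

From HB Require Import structures.
From mathcomp Require Import all_boot all_order all_algebra.
From mathcomp Require Import all_classical all_reals all_analysis.
From mathcomp Require Import complex.

Set Implicit Arguments.
Unset Strict Implicit.
Unset Printing Implicit Defensive.

Import Order.TTheory GRing.Theory Num.Theory.
Import numFieldTopology.Exports numFieldNormedType.Exports.

Local Open Scope ring_scope.
Local Open Scope complex_scope.

(* Topology on the complex numbers R[i]: the metric induced by the complex
   modulus (the standard topology of C), obtained as for any numFieldType. *)
#[non_forgetful_inheritance]
HB.instance Definition _ (R : rcfType) :=
  PseudoPointedMetric.copy (R[i]) (R[i])^o.

(* Conventions: the paper's indices 1..q are the ordinals 0..q-1 of 'I_q;
   the paper's index 1 is ord0 (q = n.+2 >= 2). All data (M, s, epsilon, b)
   are real; the matrices are embedded into complex matrices over R[i]. *)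

Section LBM.
Variable R : realType.
Variable n : nat.
Local Notation q := n.+2.
Local Notation C := (R[i]).

Definition cmx (m p : nat) (A : 'M[R]_(m, p)) : 'M[C]_(m, p) :=
  map_mx (fun x : R => x%:C) A.

Definition evec (i : 'I_q) : 'cV[R]_q := delta_mx i 0.

Definition Kmat (s eps : 'I_q -> R) : 'M[R]_q :=
  1%:M + diag_mx (\row_i s i) *m ((\col_i eps i) *m (evec ord0)^T - 1%:M).

(* \hat E(kappa) := M diag(kappa^{-c_1},...,kappa^{-c_q}) M^{-1} K
   (meaningful for kappa <> 0) *)
Definition Ehat (c : 'I_q -> int) (M : 'M[R]_q) (s eps : 'I_q -> R) (kappa : C)
  : 'M[C]_q :=
  cmx M *m diag_mx (\row_i (kappa ^ (- c i))) *m cmx (invmx M)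
    *m cmx (Kmat s eps).

(* B_{0,l} := M ( sum_{i : c_i = -l} e_i e_i^T
                  + e_pi sum_{h=1}^q b_{pi,h,1,l} e_h^T ) M^{-1} K,
   where b h l stands for b_{pi,h,1,l}. *)
Definition B0 (c : 'I_q -> int) (M : 'M[R]_q) (s eps : 'I_q -> R)
  (pi : 'I_q) (b : 'I_q -> nat -> R) (l : nat) : 'M[R]_q :=
  M *m (\sum_(i < q | c i == - (l%:Z)) evec i *m (evec i)^T
        + evec pi *m (\sum_(h < q) b h l *: (evec h)^T))
    *m invmx M *m Kmat s eps.

Definition Bsum (c : 'I_q -> int) (M : 'M[R]_q) (s eps : 'I_q -> R)
  (pi : 'I_q) (b : 'I_q -> nat -> R) (w : nat) (kappa : C) : 'M[C]_q :=
  \sum_(l < w.+1) kappa ^+ l *: cmx (B0 c M s eps pi b l).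

Definition KL (M : 'M[R]_q) (s eps : 'I_q -> R) (pi : 'I_q)
  (b : 'I_q -> nat -> R) (w : nat) (kappa : C) (phi : 'cV[C]_q) : C :=
  (((kappa^-1 *: (cmx (evec pi))^T
     - \sum_(l < w.+1) \sum_(h < q) ((b h l)%:C * kappa ^+ l) *: (cmx (evec h))^T)
    *m cmx (invmx M) *m cmx (Kmat s eps) *m phi) 0 0).

Definition expi (theta : R) : C := cos theta +i* sin theta.

End LBM.

From HB Require Import structures.
From mathcomp Require Import all_boot all_order all_algebra.
From mathcomp Require Import all_classical all_reals all_analysis.
From mathcomp Require Import complex.
From mathcomp Require Import ring zify.
Import Order.TTheory GRing.Theory Num.Theory.
Import numFieldTopology.Exports numFieldNormedType.Exports.
Local Open Scope ring_scope.
Local Open Scope classical_set_scope.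

(* Write E(kappa) = M D(kappa) M^-1 K with D(kappa) = diag(kappa^-c_i), and
   likewise sum_l B_{0,l} kappa^l = M S(kappa) M^-1 K.  Since c_pi = 1 is the only
   positive velocity, D(kappa) - S(kappa) = e_pi r(kappa) has rank one, and
   r(kappa) M^-1 K phi is exactly <KL>.  Hence for phi in the kernel of
   z - E(kappa), (z - sum_l B_{0,l} kappa^l) phi = <KL> M e_pi; applying the
   adjugate and reading the first entry (phi_1 = 1) gives
   det(z - sum_l B_{0,l} kappa^l) = <KL> * g(z, kappa) with g polynomial in the
   entries.  Along z -> z0 in U the right-hand side tends to 0 while the
   left-hand side tends to the boundary determinant at (z0, kappa_s(z0)).  The
   bulk equation, multiplied by kappa_s(z) != 0, passes to the limit likewise. *)

Definition cvg_entrywise {K : numFieldType} {T : Type} (F : set_system T) {m p : nat}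
    (A : T -> 'M[K]_(m, p)) (B : 'M[K]_(m, p)) :=
  forall i j, (fun x => A x i j) @ F --> B i j.

Section entrywise_convergence.
Context {K : numFieldType} {T : Type} {F : set_system T} {FF : Filter F}.

Lemma cvg_sumr (I : Type) (r : seq I) (P : pred I) (f : I -> T -> K) (a : I -> K) :
  (forall i, P i -> f i @ F --> a i) ->
  \sum_(i <- r | P i) f i x @[x --> F] --> \sum_(i <- r | P i) a i.
Proof. exact: (cvg_big add_continuous). Qed.

Lemma cvg_prodr (I : Type) (r : seq I) (P : pred I) (f : I -> T -> K) (a : I -> K) :
  (forall i, P i -> f i @ F --> a i) ->
  \prod_(i <- r | P i) f i x @[x --> F] --> \prod_(i <- r | P i) a i.
Proof. exact: (cvg_big mul_continuous). Qed.

Lemma cvgXn {f : T -> K} {a : K} k : f @ F --> a -> f x ^+ k @[x --> F] --> a ^+ k.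
Proof.
move=> fa; elim: k => [|k IHk].
  by rewrite expr0; under eq_cvg do rewrite expr0; exact: cvg_cst.
by rewrite exprS; under eq_cvg do rewrite exprS; exact: cvgM.
Qed.

Lemma cvg_horner (p : {poly K}) {f : T -> K} {a : K} :
  f @ F --> a -> p.[f x] @[x --> F] --> p.[a].
Proof.
move=> fa; rewrite horner_coef; under eq_cvg do rewrite horner_coef.
by apply: cvg_sumr => i _; apply: cvgMl_tmp; exact: cvgXn.
Qed.

Lemma cvg_entrywise_cst {m p} (B : 'M[K]_(m, p)) : cvg_entrywise F (fun=> B) B.
Proof. by move=> i j; exact: cvg_cst. Qed.

Lemma cvg_entrywiseB {m p} {A B : T -> 'M[K]_(m, p)} {A0 B0 : 'M[K]_(m, p)} :
  cvg_entrywise F A A0 -> cvg_entrywise F B B0 ->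
  cvg_entrywise F (fun x => A x - B x) (A0 - B0).
Proof.
move=> hA hB i j; rewrite !mxE; under eq_cvg do rewrite !mxE.
exact: cvgB.
Qed.

Lemma cvg_entrywiseZ {m p} {f : T -> K} {a : K} {A : T -> 'M[K]_(m, p)} {A0} :
  f @ F --> a -> cvg_entrywise F A A0 -> cvg_entrywise F (fun x => f x *: A x) (a *: A0).
Proof.
move=> fa hA i j; rewrite mxE; under eq_cvg do rewrite mxE.
exact: cvgM.
Qed.

Lemma cvg_entrywise_scalar {m} {f : T -> K} {a : K} :
  f @ F --> a -> cvg_entrywise F (fun x => (f x)%:M : 'M[K]_m) (a%:M).
Proof.
move=> fa i j; rewrite mxE; under eq_cvg do rewrite mxE.
exact: cvgMn.
Qed.

Lemma cvg_entrywise_sum m p (I : Type) (r : seq I) (P : pred I)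
    (A : I -> T -> 'M[K]_(m, p)) A0 :
  (forall i, P i -> cvg_entrywise F (A i) (A0 i)) ->
  cvg_entrywise F (fun x => \sum_(i <- r | P i) A i x) (\sum_(i <- r | P i) A0 i).
Proof.
move=> hA i j; rewrite summxE; under eq_cvg do rewrite summxE.
by apply: cvg_sumr => k /hA.
Qed.

Lemma cvg_entrywise_mul {m p r} {A : T -> 'M[K]_(m, p)} {B : T -> 'M[K]_(p, r)} {A0 B0} :
  cvg_entrywise F A A0 -> cvg_entrywise F B B0 ->
  cvg_entrywise F (fun x => A x *m B x) (A0 *m B0).
Proof.
move=> hA hB i j; rewrite mxE; under eq_cvg do rewrite mxE.
by apply: cvg_sumr => k _; exact: cvgM.
Qed.

Lemma cvg_det {m} {A : T -> 'M[K]_m} {A0} :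
  cvg_entrywise F A A0 -> \det (A x) @[x --> F] --> \det A0.
Proof.
move=> hA; apply: cvg_sumr => s _; apply: cvgMl_tmp.
by apply: cvg_prodr => i _; exact: hA.
Qed.

Lemma cvg_entrywise_adj {m} {A : T -> 'M[K]_m} {A0} :
  cvg_entrywise F A A0 -> cvg_entrywise F (fun x => \adj (A x)) (\adj A0).
Proof.
move=> hA i j; rewrite mxE; under eq_cvg do rewrite mxE.
apply: cvgMl_tmp; apply: cvg_det => k l; rewrite !mxE; under eq_cvg do rewrite !mxE.
exact: hA.
Qed.

End entrywise_convergence.

Section numField_limits.
Context {K : numFieldType}.

Lemma near_eq_cvg_eq {T : Type} {F : set_system T} {FF : ProperFilter F}
    {f g : T -> K} {a b : K} :
  f @ F --> a -> g @ F --> b -> (\forall x \near F, f x = g x) -> a = b.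
Proof.
move=> fa gb fg; apply: (cvg_unique (@norm_hausdorff _ K) fa).
by apply: cvg_trans gb; apply: near_eq_cvg; apply: filterS fg => x /esym.
Qed.

Lemma within_exterior_punctured_proper (z0 : K) : 1 <= `|z0| ->
  ProperFilter (within [set z | 1 < `|z| /\ z != z0] (nbhs z0)).
Proof.
move=> z0_ge1; constructor; last exact: within_filter.
move=> /nbhs_normP[e /= e_gt0 ball_U].
have z0_gt0 : 0 < `|z0| by apply: lt_le_trans z0_ge1.
have z0_neq0 : z0 != 0 by rewrite -normr_gt0.
pose t := e / (2 * `|z0|).
have t_gt0 : 0 < t by rewrite divr_gt0 // mulr_gt0.
apply: (ball_U (z0 + z0 * t)) => /=.
- rewrite opprD addrA subrr sub0r normrN normrM (gtr0_norm t_gt0) /t.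
  have -> : `|z0| * (e / (2 * `|z0|)) = e / 2 by field; rewrite lt0r_neq0.
  by rewrite ltr_pdivrMr // ltr_pMr // ltr1n.
- split; last first.
    by rewrite -subr_eq0 addrC addKr mulf_neq0 // lt0r_neq0.
  rewrite -{1}(mulr1 z0) -mulrDr normrM (gtr0_norm (_ : 0 < 1 + t)) ?addr_gt0 //.
  by apply: le_lt_trans z0_ge1 _; rewrite ltr_pMr // ltrDl.
Qed.

End numField_limits.

Lemma mulr_laurent_eq0 {K : fieldType} (b : nat -> K) (N : nat) (a kappa : K) :
  kappa != 0 -> a * kappa^-1 + \sum_(l < N) b l * kappa ^+ l = 0 ->
  a + \sum_(l < N) b l * kappa ^+ l.+1 = 0.
Proof.
move=> kappa_neq0 eq0.
transitivity (kappa * (a * kappa^-1 + \sum_(l < N) b l * kappa ^+ l)); last first.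
  by rewrite eq0 mulr0.
rewrite mulrDr mulr_sumr mulrCA mulfV // mulr1; congr (_ + _).
by apply: eq_bigr => l _; rewrite exprS mulrCA.
Qed.

Lemma det_mul_adj_entry (K : comPzRingType) (m : nat) (A : 'M[K]_m.+1)
    (phi v : 'cV[K]_m.+1) (a : K) :
  A *m phi = a *: v -> phi 0 0 = 1 -> \det A = a * (\adj A *m v) 0 0.
Proof.
move=> A_phi phi0; have := congr1 (mulmx (\adj A)) A_phi.
rewrite mulmxA mul_adj_mx mul_scalar_mx -scalemxAr.
move=> /(congr1 (fun u : 'cV[K]_m.+1 => u 0 0)).
by rewrite !mxE phi0 mulr1.
Qed.

Section boundary_algebra.
Variables (R : realType) (n : nat).
Local Open Scope complex_scope.
Local Notation q := n.+2.
Local Notation C := R[i].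

Lemma cmxD m p (A B : 'M[R]_(m, p)) : cmx (A + B) = cmx A + cmx B.
Proof. exact: (map_mxD (real_complex R)). Qed.

Lemma cmxM m p r (A : 'M[R]_(m, p)) (B : 'M[R]_(p, r)) : cmx (A *m B) = cmx A *m cmx B.
Proof. exact: (map_mxM (real_complex R)). Qed.

Lemma cmxZ m p (a : R) (A : 'M[R]_(m, p)) : cmx (a *: A) = a%:C *: cmx A.
Proof. exact: (map_mxZ (real_complex R)). Qed.

Lemma cmx_tr m p (A : 'M[R]_(m, p)) : cmx A^T = (cmx A)^T.
Proof. by rewrite /cmx map_trmx. Qed.

Lemma cmx_sum m p (I : Type) (r : seq I) (P : pred I) (A : I -> 'M[R]_(m, p)) :
  cmx (\sum_(i <- r | P i) A i) = \sum_(i <- r | P i) cmx (A i).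
Proof. exact: (raddf_sum (map_mx (real_complex R))). Qed.

Lemma cmx_evec_proj (i : 'I_q) : cmx (evec R i *m (evec R i)^T) = delta_mx i i.
Proof. by rewrite /evec trmx_delta mul_delta_mx /cmx map_delta_mx. Qed.

Lemma diag_exp_velocities_split (c : 'I_q -> int) (pi : 'I_q) (w : nat) (kappa : C) :
  injective c -> (forall i, c i <= 1) -> c pi = 1 -> (forall i, - c i <= w%:Z) ->
  diag_mx (\row_i kappa ^ (- c i)) =
  \sum_(l < w.+1) kappa ^+ l *: cmx (\sum_(i < q | c i == - l%:Z) evec R i *m (evec R i)^T)
  + kappa^-1 *: cmx (evec R pi *m (evec R pi)^T).
Proof.
move=> c_inj c_le1 c_pi c_le_w.
rewrite diag_mx_sum_delta (bigD1 pi) //= addrC mxE c_pi cmx_evec_proj; congr (_ + _).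
under [RHS]eq_bigr => l _ do rewrite cmx_sum scaler_sumr.
rewrite (exchange_big_dep (fun i => i != pi)) /=; last first.
  by move=> l i _ /eqP ci; apply/eqP => ip; move: ci; rewrite ip c_pi; lia.
apply: eq_bigr => i i_pi.
have ci_le0 : c i <= 0.
  have ci_neq1 : c i != 1 by apply: contra_neq i_pi => ci1; apply: c_inj; rewrite ci1.
  by have := c_le1 i; lia.
have l_lt : (`|c i|%N < w.+1)%N by have := c_le_w i; lia.
rewrite (big_pred1 (Ordinal l_lt)) /=; last first.
  by move=> l /=; apply/eqP/eqP => [ci|->] /=; [apply: val_inj => /=|]; lia.
by rewrite mxE cmx_evec_proj; have -> : - c i = `|c i|%N by lia.
Qed.

Definition boundary_stencil (c : 'I_q -> int) (pi : 'I_q) (b : 'I_q -> nat -> R)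
    (l : nat) : 'M[R]_q :=
  \sum_(i < q | c i == - l%:Z) evec R i *m (evec R i)^T
  + evec R pi *m (\sum_(h < q) b h l *: (evec R h)^T).

Definition KL_row (pi : 'I_q) (b : 'I_q -> nat -> R) (w : nat) (kappa : C) : 'rV[C]_q :=
  kappa^-1 *: (cmx (evec R pi))^T
  - \sum_(l < w.+1) \sum_(h < q) ((b h l)%:C * kappa ^+ l) *: (cmx (evec R h))^T.

Lemma diag_exp_velocities_sub_stencils (c : 'I_q -> int) (pi : 'I_q)
    (b : 'I_q -> nat -> R) (w : nat) (kappa : C) :
  injective c -> (forall i, c i <= 1) -> c pi = 1 -> (forall i, - c i <= w%:Z) ->
  diag_mx (\row_i kappa ^ (- c i))
  - \sum_(l < w.+1) kappa ^+ l *: cmx (boundary_stencil c pi b l)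
  = cmx (evec R pi) *m KL_row pi b w kappa.
Proof.
move=> c_inj c_le1 c_pi c_le_w.
rewrite (diag_exp_velocities_split _ pi w) // /boundary_stencil /KL_row.
under [X in _ - X]eq_bigr => l _ do rewrite cmxD scalerDr.
rewrite big_split /= opprD addrACA subrr add0r mulmxBr -scalemxAr cmxM cmx_tr.
congr (_ - _); rewrite mulmx_sumr; apply: eq_bigr => l _.
rewrite cmxM cmx_sum !mulmx_sumr scaler_sumr; apply: eq_bigr => h _.
by rewrite cmxZ cmx_tr -!scalemxAr scalerA mulrC.
Qed.

Lemma boundary_defect (c : 'I_q -> int) (M : 'M[R]_q) (s eps : 'I_q -> R) (pi : 'I_q)
    (b : 'I_q -> nat -> R) (w : nat) (kappa z : C) (phi : 'cV[C]_q) :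
  injective c -> (forall i, c i <= 1) -> c pi = 1 -> (forall i, - c i <= w%:Z) ->
  (z%:M - Ehat c M s eps kappa) *m phi = 0 ->
  (z%:M - Bsum c M s eps pi b w kappa) *m phi
    = KL M s eps pi b w kappa phi *: (cmx M *m cmx (evec R pi)).
Proof.
move=> c_inj c_le1 c_pi c_le_w kerE.
have BsumE : Bsum c M s eps pi b w kappa = cmx M
    *m (\sum_(l < w.+1) kappa ^+ l *: cmx (boundary_stencil c pi b l))
    *m cmx (invmx M) *m cmx (Kmat s eps).
  rewrite mulmx_sumr !mulmx_suml; apply: eq_bigr => l _.
  by rewrite /B0 !cmxM -scalemxAr !scalemxAl.
rewrite -[LHS]subr0 -kerE -mulmxBl opprB addrC addrA subrK /Ehat BsumE -!mulmxBl -mulmxBr.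
rewrite diag_exp_velocities_sub_stencils // /KL -/(KL_row pi b w kappa).
by rewrite -mul_mx_scalar -mx11_scalar !mulmxA.
Qed.
End boundary_algebra.

Theorem mainTheorem5 (R : realType) (n : nat)
  (c : 'I_n.+2 -> int) (pi : 'I_n.+2) (M : 'M[R]_n.+2)
  (s eps : 'I_n.+2 -> R) (b : 'I_n.+2 -> nat -> R) (w : nat)
  (dm1 : {poly R[i]}) (d : nat -> {poly R[i]}) (pbar : nat)
  (kappa_s : R[i] -> R[i]) (phi_s : R[i] -> 'cV[R[i]]_n.+2)
  (z0 kappa0 : R[i]) :
  (* velocities: pairwise distinct integers with max 1, attained at pi *)
  injective c ->
  (forall i, c i <= 1) ->
  c pi = 1 ->
  (* the boundary stencil w covers the bulk stencil *)
  (forall i, - c i <= w%:Z) ->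
  M \in unitmx ->
  (forall i, i != ord0 -> 0 < s i <= 2) ->
  eps ord0 = 1 ->
  (* von Neumann stability *)
  (forall (theta : R) (lambda : R[i]),
      eigenvalue (Ehat c M s eps (expi theta)) lambda -> `|lambda| <= 1) ->
  (* structure of the bulk characteristic polynomial *)
  dm1 != 0 ->
  (forall z kappa : R[i], kappa != 0 ->
     \det (z%:M - Ehat c M s eps kappa)
       = dm1.[z] * kappa^-1 + \sum_(l < pbar.+1) (d l).[z] * kappa ^+ l) ->
  (* kappa_s z is the stable root for z in U *)
  (forall z : R[i], 1 < `|z| ->
     [/\ kappa_s z != 0, `|kappa_s z| < 1 &
         \det (z%:M - Ehat c M s eps (kappa_s z)) = 0]) ->
  (* phi_s z spans the kernel and is normalized by its first component *)
  (forall z : R[i], 1 < `|z| ->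
     [/\ (z%:M - Ehat c M s eps (kappa_s z)) *m phi_s z = 0,
         phi_s z ord0 0 = 1 &
         forall v : 'cV[R[i]]_n.+2,
           (z%:M - Ehat c M s eps (kappa_s z)) *m v = 0 ->
           exists a : R[i], v = a *: phi_s z]) ->
  (* z0 in closed U, kappa_s extends continuously to z0 with value kappa0 *)
  1 <= `|z0| ->
  kappa_s @ within [set z : R[i] | 1 < `|z|] (nbhs z0) --> kappa0 ->
  (* the Kreiss--Lopatinskii scalar product tends to 0 at z0 *)
  (fun z => KL M s eps pi b w (kappa_s z) (phi_s z))
     @ within [set z : R[i] | 1 < `|z| /\ z != z0] (nbhs z0) --> (0 : R[i]) ->
  (* conclusion: kappa0 is a root of the bulk characteristic equation at z0
     (in the polynomial form kappa * det(z I - \hat E(kappa)) = 0) and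
     (z0, kappa0) is an eigenvalue of the boundary scheme *)
  dm1.[z0] + \sum_(l < pbar.+1) (d l).[z0] * kappa0 ^+ l.+1 = 0
  /\ \det (z0%:M - Bsum c M s eps pi b w kappa0) = 0.
Proof.
move=> c_inj c_le1 c_pi c_le_w _ _ _ _ _ charpoly stable kernel z0_ge1 kappa_cvg KL_cvg.
set F := within [set z : R[i] | 1 < `|z| /\ z != z0] (nbhs z0).
have F_proper : ProperFilter F by exact: within_exterior_punctured_proper.
have near_U : F [set z | 1 < `|z| /\ z != z0] by exact: withinT.
have kF : kappa_s @ F --> kappa0.
  by move=> P /kappa_cvg; apply: within_subset => // z [].
have zF : (fun z => z) @ F --> z0 by exact: cvg_within.
split.
  have bulkF : (fun z => dm1.[z] + \sum_(l < pbar.+1) (d l).[z] * kappa_s z ^+ l.+1)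
      @ F --> dm1.[z0] + \sum_(l < pbar.+1) (d l).[z0] * kappa0 ^+ l.+1.
    (* the metric put on R[i] is not canonically a normed Z-module, R[i]^o is *)
    apply: (cvgD (V := R[i]^o) (cvg_horner dm1 zF)).
    by apply: cvg_sumr => l _; exact: cvgM (cvg_horner _ zF) (cvgXn _ kF).
  apply: (near_eq_cvg_eq bulkF (cvg_cst 0)).
  apply: filterS near_U => z [/stable[kappa_neq0 _ det0] _].
  by apply: (mulr_laurent_eq0 (fun l => (d l).[z])) => //; rewrite -charpoly.
pose A z := z%:M - Bsum c M s eps pi b w (kappa_s z).
have AF : cvg_entrywise F A (z0%:M - Bsum c M s eps pi b w kappa0).
  apply: cvg_entrywiseB; first exact: (cvg_entrywise_scalar zF).
  apply: cvg_entrywise_sum => l _.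
  exact: (cvg_entrywiseZ (cvgXn _ kF) (cvg_entrywise_cst _)).
pose v := cmx M *m cmx (evec R pi).
have KL_adjF : (fun z => KL M s eps pi b w (kappa_s z) (phi_s z) * (\adj (A z) *m v) 0 0)
    @ F --> 0.
  rewrite -(mul0r ((\adj (z0%:M - Bsum c M s eps pi b w kappa0) *m v) 0 0)).
  apply: cvgM KL_cvg _.
  exact: (cvg_entrywise_mul (cvg_entrywise_adj AF) (cvg_entrywise_cst v)).
apply: (near_eq_cvg_eq (cvg_det AF) KL_adjF).
apply: filterS near_U => z [/kernel[ker_phi phi0 _] _].
by apply: det_mul_adj_entry phi0; apply: boundary_defect.
Qed.
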